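(* Consider a system with a finite set $S$ of tasks, periods $\tau_X$, frame length $T=\mathrm{lcm}\{\tau_X : X\in S\}$, per-execution rewards $r^1_X\ge r^2_X\ge\dots\ge r^{\tau_X}_X\ge 0$ and minimum average reward requirements $q^*_X>0$ (as described in the context). The system is feasible only if there exist real numbers $\{f^i_X : X\in S,\ 1\le i\le \tau_X\}$ such that (1) $q^*_X\le \sum_{i=1}^{\tau_X} f^i_X r^i_X$ for all $X\in S$; (2) $0\le f^i_X\le T/\tau_X$ for all $X\in S$ and $1\le i\le\tau_X$; (3) $\sum_{X\in S}\sum_{i=1}^{\tau_X} f^i_X\le T$.
   Context: A system consists of a finite set $S$ of tasks. Time is slotted, $t\in\{0,1,2,\dots\}$. Each task $X\in S$ has a period $\tau_X$ (a positive integer); time is partitioned into consecutive periods of $X$ of $\tau_X$ slots each, the first starting at $t=0$. In each period, task $X$ has one job, which is removed from the system at the end of that period. Let $T$ be the least common multiple of $\{\tau_X : X\in S\}$; time is partitioned into consecutive frames of $T$ slots each, the first starting at $t=0$, so each frame contains $T/\tau_X$ periods of $X$. A scheduling policy (possibly randomized, possibly history dependent) chooses in each time slot either to idle or to execute the job of exactly one task; a job may be executed in any number of slots within its period. Each task $X$ has rewards $r^1_X\ge r^2_X\ge\dots\ge r^{\tau_X}_X\ge 0$: when the job of $X$ is executed for the $i$-th time within a period, $X$ obtains reward $r^i_X$. Let $s_X(t)$ be the total reward obtained by $X$ between time $0$ and time $t$; the average reward of $X$ is $q_X=\liminf_{t\to\infty} s_X(t)/(t/T)$. Each task has a minimum average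 reward requirement $q^*_X>0$. A policy fulfills the system if under it $q_X\ge q^*_X$ with probability 1 for all $X\in S$. The system is feasible if some scheduling policy fulfills it. *)

From HB Require Import structures.
From mathcomp Require Import all_boot all_order all_algebra.
From mathcomp Require Import all_classical all_reals all_analysis.
Set Implicit Arguments. Unset Strict Implicit. Unset Printing Implicit Defensive.
Import Order.TTheory GRing.Theory Num.Theory.
Local Open Scope ring_scope.

(* A schedule: in slot t, [sched t = None] means idle, [Some X] means the job
   of task X (of its current period) is executed. *)

Definition frame_len (S : finType) (tau : S -> nat) : nat :=
  \big[lcmn/1%N]_(X : S) tau X.

(* Number of slots u' of the current period of X containing slot u with
   u' <= u in which X is executed: if X is executed at u, this is i such that
   this is the i-th execution of X's job within its period. *)
Definition exec_index (S : finType) (tau : S -> nat) (sched : nat -> option S)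
    (X : S) (u : nat) : nat :=
  (\sum_((u %/ tau X) * tau X <= v < u.+1) (sched v == Some X))%N.

Definition slot_reward (R : realType) (S : finType) (tau : S -> nat)
    (r : S -> nat -> R) (sched : nat -> option S) (X : S) (u : nat) : R :=
  if sched u == Some X then r X (exec_index tau sched X u) else 0.

Definition total_reward (R : realType) (S : finType) (tau : S -> nat)
    (r : S -> nat -> R) (sched : nat -> option S) (X : S) (t : nat) : R :=
  \sum_(u < t) slot_reward tau r sched X u.

Definition avg_reward (R : realType) (S : finType) (tau : S -> nat)
    (r : S -> nat -> R) (sched : nat -> option S) (X : S) : \bar R :=
  limn_einf (fun t : nat =>
    ((total_reward tau r sched X t) / (t%:R / (frame_len tau)%:R))%:E).

(* A (realisation of a possibly randomized, history dependent) policy is a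
   random schedule on some probability space; it fulfills the system if
   q_X >= q*_X for all X, almost surely. *)
Definition fulfills (R : realType) (S : finType) (tau : S -> nat)
    (r : S -> nat -> R) (qstar : S -> R)
    (d : measure_display) (Omega : measurableType d)
    (P : probability Omega R) (sched : Omega -> nat -> option S) : Prop :=
  {ae P, forall w, forall X : S, ((qstar X)%:E <= avg_reward tau r (sched w) X)%E}.

Definition feasible (R : realType) (S : finType) (tau : S -> nat)
    (r : S -> nat -> R) (qstar : S -> R) : Prop :=
  exists (d : measure_display) (Omega : measurableType d)
         (P : probability Omega R) (sched : Omega -> nat -> option S),
    fulfills tau r qstar P sched.

(* Fix one realisation of the policy meeting all requirements; it exists
   because they hold almost surely.  For K frames, let f(K)^i_X be the number
   of slots among the first K frames in which X executes the i-th job of its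
   period, divided by K.  A period contains at most one such slot, so
   f(K)^i_X lies in [0, T/tau_X]; at most one task runs per slot, so the
   f(K)^i_X sum to at most T; and sum_i f(K)^i_X r^i_X is the reward of X per
   frame over the first K frames.  By Tychonoff the sequence f(K) has a
   cluster point f; the closed constraints (2) and (3) pass to f, and so does
   (1) because the liminf of the reward per frame is at least q*_X. *)

From HB Require Import structures.
From mathcomp Require Import all_boot all_order all_algebra.
From mathcomp Require Import all_classical all_reals all_analysis.
From mathcomp Require Import lra.
Set Implicit Arguments. Unset Strict Implicit. Unset Printing Implicit Defensive.
Import Order.TTheory GRing.Theory Num.Theory.
Import numFieldNormedType.Exports.
Local Open Scope ring_scope.

Section ExecCount.
Variables (S : finType) (tau : S -> nat) (sched : nat -> option S).
Hypothesis tau_pos : forall X, (0 < tau X)%N.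

Lemma exec_index_bounds X u : sched u = Some X ->
  (1 <= exec_index tau sched X u <= tau X)%N.
Proof.
move=> su; rewrite /exec_index big_nat_recr ?leq_divM //= su eqxx addn1 ltnS /=.
have count_le : (\sum_(u %/ tau X * tau X <= v < u) (sched v == Some X)
    <= \sum_(u %/ tau X * tau X <= v < u) 1)%N.
  by apply: leq_sum => v _; exact: leq_b1.
apply: (leq_ltn_trans count_le).
by rewrite sum_nat_const_nat muln1 {1}(divn_eq u (tau X)) addKn ltn_pmod.
Qed.

Lemma ltn_exec_index X u v : sched v = Some X -> (u < v)%N ->
  (u %/ tau X = v %/ tau X)%N ->
  (exec_index tau sched X u < exec_index tau sched X v)%N.
Proof.
move=> sv uv same_period; rewrite /exec_index -same_period.
have start_le : (u %/ tau X * tau X <= u.+1)%N by rewrite leqW ?leq_divM.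
rewrite (@big_cat_nat _ _ _ u.+1 _ v.+1) //=; last exact: ltnW.
by rewrite [X in (_ < _ + X)%N]big_nat_recr //= sv eqxx addn1 addnS ltnS leq_addr.
Qed.

Definition exec_count n X i : nat :=
  \sum_(u < n) ((sched u == Some X) && (exec_index tau sched X u == i)).

(* At most one such slot per period, since the execution index strictly
   increases within a period. *)
Lemma exec_count_le n X i : (tau X %| n)%N -> (exec_count n X i <= n %/ tau X)%N.
Proof.
move=> dvd_n.
pose A := [pred u : 'I_n | (sched u == Some X) && (exec_index tau sched X u == i)].
have -> : exec_count n X i = #|A|.
  rewrite /exec_count -sum1_card [RHS]big_mkcond /=.
  by apply: eq_bigr => u _; rewrite inE; case: (_ && _).
have period_lt (u : 'I_n) : (u %/ tau X < n %/ tau X)%N.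
  by rewrite ltn_divLR // divnK.
rewrite -[X in (_ <= X)%N]card_ord.
apply: (@leq_card_in _ _ (fun u => Ordinal (period_lt u))) => u v.
rewrite !inE => /andP[/eqP su /eqP iu] /andP[/eqP sv /eqP iv] [] same_period.
case: (ltngtP u v) => [uv|vu|/val_inj //].
- by have := ltn_exec_index sv uv same_period; rewrite iu iv ltnn.
- by have := ltn_exec_index su vu (esym same_period); rewrite iu iv ltnn.
Qed.

Lemma sum_exec_count n X : (\sum_(1 <= i < (tau X).+1) exec_count n X i)%N =
  (\sum_(u < n) (sched u == Some X))%N.
Proof.
rewrite exchange_big /=; apply: eq_bigr => u _.
case: eqP => [su|_] /=; last by rewrite big1.
rewrite (eq_bigr (fun i => if i == exec_index tau sched X u then 1 else 0)%N).
  by rewrite -big_mkcond big_nat1_eq ltnS exec_index_bounds.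
by move=> i _; rewrite eq_sym; case: eqP.
Qed.

Lemma sum_exec_count_le n :
  (\sum_(X : S) \sum_(1 <= i < (tau X).+1) exec_count n X i <= n)%N.
Proof.
under eq_bigr do rewrite sum_exec_count.
rewrite exchange_big /= -[X in (_ <= X)%N]card_ord -sum1_card.
apply: leq_sum => u _; case: (sched u) => [Y|]; last by rewrite big1.
rewrite (bigD1 Y) //= eqxx big1 // => X /negbTE.
by rewrite eq_sym (inj_eq (@Some_inj _)) => ->.
Qed.

Lemma total_reward_exec_count (R : realType) (r : S -> nat -> R) n X :
  total_reward tau r sched X n =
  \sum_(1 <= i < (tau X).+1) (exec_count n X i)%:R * r X i.
Proof.
under [RHS]eq_bigr do rewrite natr_sum mulr_suml.
rewrite exchange_big /=; apply: eq_bigr => u _; rewrite /slot_reward.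
case: eqP => [su|_] /=; last by rewrite big1 // => i _; rewrite mul0r.
under eq_bigr do rewrite mulrC mulr_natr mulrb eq_sym.
by rewrite -big_mkcond big_nat1_eq ltnS exec_index_bounds.
Qed.

End ExecCount.

Lemma ae_exists d (T : measurableType d) (R : realType)
    (mu : {measure set T -> \bar R}) (Q : T -> Prop) :
  mu setT != 0%E -> {ae mu, forall w, Q w} -> exists w, Q w.
Proof.
move=> muT0 [A [mA muA0 notQ_A]]; apply: contrapT => noQ.
have : (mu setT <= mu A)%E.
  by apply: le_measure; rewrite ?inE // => w _; apply: notQ_A => Qw; apply: noQ; exists w.
by rewrite muA0 => muT_le0; move: muT0; rewrite eq_le muT_le0 measure_ge0.
Qed.

Lemma limn_einf_ge_eventually (R : realType) (v : (\bar R)^nat) (a e : R) :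
  0 < e -> (a%:E <= limn_einf v)%E ->
  exists N, forall n, (N <= n)%N -> ((a - e)%:E <= v n)%E.
Proof.
move=> e_gt0; rewrite limn_einf_lim => a_le.
have [[N infN]|no_N] := pselect (exists N, ((a - e)%:E < einfs v N)%E).
  by exists N => n Nn; apply: le_trans (ltW infN) _; apply: ereal_inf_lbound; exists n.
have : (limn (einfs v) <= (a - e)%:E)%E.
  apply: lime_le; first exact: is_cvg_einfs.
  by apply: nearW => N; rewrite leNgt; apply/negP => ?; apply: no_N; exists N.
by move=> /(le_trans a_le); rewrite lee_fin; lra.
Qed.

Local Open Scope classical_set_scope.

Lemma cluster_continuous_closed (T U : topologicalType) (F : set_system T)
    (h : T -> U) (C : set U) g :
  continuous h -> closed C -> cluster F g -> F (h @^-1` C) -> C (h g).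
Proof.
move=> h_cont C_closed; rewrite clusterE => g_cl FC.
have hC_closed : closed (h @^-1` C) by apply: preimage_closed => // x _; exact: h_cont.
by have := g_cl _ FC; rewrite -((closure_id _).1 hC_closed).
Qed.

Lemma frame_len_gt0 (S : finType) (tau : S -> nat) :
  (forall X, 0 < tau X)%N -> (0 < frame_len tau)%N.
Proof.
move=> tau_pos; apply: (big_ind (fun m => 0 < m)%N) => // m n m_gt0 n_gt0.
by rewrite lcmn_gt0 m_gt0.
Qed.

Lemma dvdn_frame_len (S : finType) (tau : S -> nat) X : (tau X %| frame_len tau)%N.
Proof. exact: biglcmn_sup. Qed.

Section FixedSchedule.
Import ArrowAsProduct.
Variables (R : realType) (S : finType) (tau : S -> nat) (r : S -> nat -> R)
  (sched : nat -> option S).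
Hypothesis tau_pos : forall X, (0 < tau X)%N.
Local Notation T := (frame_len tau).

Definition exec_freq (K : nat) (j : S * nat) : R :=
  (exec_count tau sched (K * T) j.1 j.2)%:R / K%:R.

Definition freq_box : set (S * nat -> R) :=
  [set g | forall j, `[0, (T %/ tau j.1)%:R]%classic (g j)].

Definition reward_rate (g : S * nat -> R) X := \sum_(1 <= i < (tau X).+1) g (X, i) * r X i.

Definition load (g : S * nat -> R) := \sum_(X : S) \sum_(1 <= i < (tau X).+1) g (X, i).

Lemma compact_freq_box : compact freq_box.
Proof. exact: (tychonoff (fun j => @segment_compact R _ _)). Qed.

Lemma exec_freq_box K : freq_box (exec_freq K).
Proof.
move=> j; rewrite /= in_itv /= /exec_freq divr_ge0 //=.
have [->|K_gt0] := posnP K; first by rewrite invr0 mulr0.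
rewrite ler_pdivrMr ?ltr0n // -natrM ler_nat divn_mulAC ?dvdn_frame_len // [(T * K)%N]mulnC.
by apply: exec_count_le => //; rewrite dvdn_mull ?dvdn_frame_len.
Qed.

Lemma continuous_reward_rate X : continuous (reward_rate ^~ X).
Proof.
apply: (continuous_big add_continuous) => i _ g.
by apply: continuousM; [exact: proj_continuous | exact: cst_continuous].
Qed.

Lemma continuous_load : continuous load.
Proof.
apply: (continuous_big add_continuous) => X _.
by apply: (continuous_big add_continuous) => i _; exact: proj_continuous.
Qed.

Lemma reward_rate_exec_freq K X :
  reward_rate (exec_freq K) X = total_reward tau r sched X (K * T) / K%:R.
Proof.
rewrite (total_reward_exec_count _ tau_pos) mulr_suml.
by apply: eq_bigr => i _; rewrite mulrAC.
Qed.

Lemma load_exec_freq K : (0 < K)%N -> load (exec_freq K) <= T%:R.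
Proof.
move=> K_gt0; rewrite /load /exec_freq /=.
under eq_bigr do rewrite -mulr_suml -natr_sum.
rewrite -mulr_suml -natr_sum ler_pdivrMr ?ltr0n // -natrM ler_nat mulnC.
exact: sum_exec_count_le.
Qed.

Lemma exec_freq_cluster : exists2 g, freq_box g & cluster (exec_freq @ \oo) g.
Proof.
have [g [g_box g_cluster]] : (freq_box `&` cluster (exec_freq @ \oo)) !=set0.
  by apply: compact_freq_box; exists 0%N => // K _; exact: exec_freq_box.
by exists g.
Qed.

Lemma cluster_reward_rate_ge g (q : R) X :
  cluster (exec_freq @ \oo) g -> (q%:E <= avg_reward tau r sched X)%E ->
  q <= reward_rate g X.
Proof.
move=> g_cluster q_le_avg; apply/ler_addgt0Pr => e e_gt0; rewrite -lerBlDr.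
have [N avgN] := limn_einf_ge_eventually e_gt0 q_le_avg.
apply: (cluster_continuous_closed (continuous_reward_rate (X:=X)) (@closed_ge _ _) g_cluster).
exists N.+1 => // K /= N_lt_K.
have T_gt0 := frame_len_gt0 tau_pos.
have := avgN (K * T)%N (leq_trans (ltnW N_lt_K) (leq_pmulr _ T_gt0)).
by rewrite reward_rate_exec_freq lee_fin natrM mulfK // pnatr_eq0 -lt0n.
Qed.

Lemma cluster_load_le g : cluster (exec_freq @ \oo) g -> load g <= T%:R.
Proof.
move=> g_cluster.
apply: (cluster_continuous_closed continuous_load (@closed_le _ _) g_cluster).
by exists 1%N => // K /= K_gt0; exact: load_exec_freq.
Qed.

End FixedSchedule.

Definition relaxed_schedule (R : realType) (S : finType) (tau : S -> nat)
    (r : S -> nat -> R) (qstar : S -> R) (f : S -> nat -> R) : Prop :=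
  [/\ (forall X, qstar X <= \sum_(1 <= i < (tau X).+1) f X i * r X i),
      (forall X i, (1 <= i <= tau X)%N ->
         0 <= f X i /\ f X i <= (frame_len tau)%:R / (tau X)%:R) &
      \sum_(X : S) \sum_(1 <= i < (tau X).+1) f X i <= (frame_len tau)%:R].

Lemma relaxed_schedule_of_schedule (R : realType) (S : finType) (tau : S -> nat)
    (r : S -> nat -> R) (qstar : S -> R) (sched : nat -> option S) :
  (forall X, 0 < tau X)%N ->
  (forall X, ((qstar X)%:E <= avg_reward tau r sched X)%E) ->
  exists f, relaxed_schedule tau r qstar f.
Proof.
move=> tau_pos q_le_avg.
have [g g_box g_cluster] := exec_freq_cluster R sched tau_pos.
exists (fun X i => g (X, i)); split.
- by move=> X; exact: (cluster_reward_rate_ge tau_pos g_cluster (q_le_avg X)).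
- move=> X i _; have := g_box (X, i); rewrite /= in_itv /= => /andP[g_ge0 g_le].
  by rewrite -natr_div ?dvdn_frame_len // unitfE pnatr_eq0 -lt0n tau_pos.
- exact: (cluster_load_le tau_pos g_cluster).
Qed.

Theorem lemma1 (R : realType) (S : finType) (tau : S -> nat)
    (r : S -> nat -> R) (qstar : S -> R)
    (tau_pos : forall X, (0 < tau X)%N)
    (r_noninc : forall X i, (1 <= i)%N -> (i < tau X)%N -> r X i.+1 <= r X i)
    (r_nonneg : forall X i, (1 <= i <= tau X)%N -> 0 <= r X i)
    (qstar_pos : forall X, 0 < qstar X) :
  feasible tau r qstar ->
  exists f : S -> nat -> R,
    [/\ (forall X, qstar X <= \sum_(1 <= i < (tau X).+1) f X i * r X i),
        (forall X i, (1 <= i <= tau X)%N ->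
           0 <= f X i /\ f X i <= (frame_len tau)%:R / (tau X)%:R) &
        \sum_(X : S) \sum_(1 <= i < (tau X).+1) f X i <= (frame_len tau)%:R].
Proof.
move=> [d [W [P [sched fulfilled]]]].
have P_neq0 : P setT != 0%E by rewrite probability_setT onee_neq0.
have [w q_le_avg] := ae_exists P_neq0 fulfilled.
exact: relaxed_schedule_of_schedule tau_pos q_le_avg.
Qed.
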